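(* Let $S_{r,N}$ be a nontrivial atomic exponential Puiseux semiring. Then $$\{|\mathsf{n}(r)^{\delta_n}-\mathsf{d}(r)^{\delta_n}|: n\in\mathbb{N}\}\subseteq\Delta(S_{r,N})\subseteq\{k\in\mathbb{Z}: |\mathsf{n}(r)-\mathsf{d}(r)|\le k\le|\mathsf{n}(r)^{\delta_0}-\mathsf{d}(r)^{\delta_0}|\}.$$
   Context: $\mathbb{N}=\{0,1,2,\dots\}$. A numerical monoid $N$ is an additive submonoid of $\mathbb{N}$ with finite complement in $\mathbb{N}$; let $s_0<s_1<\cdots$ be its elements and $\delta_n=s_{n+1}-s_n$. For $r\in\mathbb{Q}_{>0}$ write $r=\mathsf{n}(r)/\mathsf{d}(r)$ in lowest terms. The exponential Puiseux semiring $S_{r,N}$ is the additive submonoid of $\mathbb{Q}_{\ge0}$ generated by $\{r^k:k\in N\}$; it is nontrivial if $r\notin\mathbb{N}$, and then atomic iff $\mathsf{n}(r)>1$. For an atomic monoid $M$ and $x\in M$ with set of lengths $\mathsf{L}(x)$, a positive integer $d$ is a distance of $x$ if $\mathsf{L}(x)\cap\{l,\dots,l+d\}=\{l,l+d\}$ for some $l\in\mathsf{L}(x)$; $\Delta(x)$ is the set of distances of $x$ and $\Delta(M)=\bigcup_{x\in M}\Delta(x)$. *)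

From HB Require Import structures.
From mathcomp Require Import all_boot all_order all_algebra.
Set Implicit Arguments. Unset Strict Implicit. Unset Printing Implicit Defensive.
Import Order.TTheory GRing.Theory Num.Theory.
Local Open Scope ring_scope.

Definition numerical_monoid (N : nat -> Prop) : Prop :=
  N 0%N /\ (forall a b, N a -> N b -> N (a + b)%N) /\
  exists b : nat, forall m, (b <= m)%N -> N m.

Definition enumerates (N : nat -> Prop) (s : nat -> nat) : Prop :=
  (forall n, (s n < s n.+1)%N) /\ (forall m, N m <-> exists n, s n = m).

Definition exp_puiseux (r : rat) (N : nat -> Prop) (x : rat) : Prop :=
  exists ks : seq nat, (forall k, k \in ks -> N k) /\ x = \sum_(k <- ks) r ^+ k.

(* Atoms of a submonoid M of (Q,+) (its only unit is 0). *)
Definition is_atom (M : rat -> Prop) (a : rat) : Prop :=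
  M a /\ a != 0 /\
  forall u v, M u -> M v -> a = u + v -> u = 0 \/ v = 0.

Definition atomic (M : rat -> Prop) : Prop :=
  forall x, M x -> x != 0 ->
    exists s : seq rat, (forall a, a \in s -> is_atom M a) /\ x = \sum_(a <- s) a.

Definition in_lengths (M : rat -> Prop) (x : rat) (l : nat) : Prop :=
  exists s : seq rat, size s = l /\ (forall a, a \in s -> is_atom M a) /\
                      x = \sum_(a <- s) a.

Definition is_distance (M : rat -> Prop) (x : rat) (d : nat) : Prop :=
  (0 < d)%N /\ exists l, in_lengths M x l /\ in_lengths M x (l + d) /\
    forall l', (l < l')%N -> (l' < l + d)%N -> ~ in_lengths M x l'.

Definition delta_set (M : rat -> Prop) (d : nat) : Prop :=
  exists x, M x /\ is_distance M x d.

From HB Require Import structures.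
From mathcomp Require Import all_boot all_order all_algebra.
From mathcomp Require Import zify ring.
From Stdlib Require Import Classical.
Import Order.TTheory GRing.Theory Num.Theory.
Local Open Scope ring_scope.
Set Implicit Arguments. Unset Strict Implicit.

(* Let r = p/q > 0 in lowest terms, N a numerical monoid with enumeration
   s_0 < s_1 < ..., and S = S_{r,N}.  The atoms of S are exactly the powers
   r^k, k in N (valuations at p and q), so a factorization of length l of x
   is a list of l exponents in N whose power sum is x.  All length changes
   come from the relations p^(d_i) r^(s_i) = q^(d_i) r^(s_(i+1)), where
   d_i = s_(i+1) - s_i.
   - Every distance is a multiple of |p - q|: clearing denominators, each term
     r^k contributes q^E modulo |p - q|.
   - Orienting the relations so that they shorten factorizations, a
     factorization to which none applies ("canonical") is unique up to
     permutation: its multiplicities are digits in mixed radix, read from the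
     bottom when p > q and from the top (as a power sum of 1/r) when p < q.
     A distance d > |p^(d_0) - q^(d_0)| is then impossible, since the longer
     factorization would be canonical and at least as short as the shorter one.
   - The element p^(d_i) r^(s_i) has lengths p^(d_i) and q^(d_i) and none in
     between, since each of its factorizations lies on one side of the gap
     between s_i and s_(i+1). *)

Lemma counts_perm (s1 s2 : seq nat) :
  (forall j, count_mem j s1 = count_mem j s2) -> perm_eq s1 s2.
Proof. by move=> e; apply/allP => j _ /=; rewrite e. Qed.

Lemma count_mem_filter (P : pred nat) j (s : seq nat) :
  count_mem j (filter P s) = if P j then count_mem j s else 0%N.
Proof.
rewrite count_filter; case: ifP => Pj.
  by apply: eq_count => k /=; case: eqVneq => // ->; rewrite Pj.
rewrite (@eq_count _ _ pred0) ?count_pred0 // => k /=.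
by case: eqVneq => // ->; rewrite Pj.
Qed.

Lemma perm_extract (j m : nat) (ks : seq nat) : (m <= count_mem j ks)%N ->
  exists rest, perm_eq ks (nseq m j ++ rest).
Proof.
elim: m ks => [|m IH] ks le_m; first by exists ks.
have j_in : j \in ks by rewrite -has_pred1 has_count; apply: leq_trans le_m.
have to_rem := perm_to_rem j_in.
have [|rest perm_rest] := IH (rem j ks).
  by move: le_m; rewrite (permP to_rem) /= eqxx.
by exists rest; apply: (perm_trans to_rem); rewrite /= perm_cons.
Qed.

Lemma exponent_bound (ks : seq nat) : exists E, forall k, k \in ks -> (k <= E)%N.
Proof. by exists (\max_(k <- ks) k) => k hk; apply: leq_bigmax_seq. Qed.

Lemma leq_wexp2r (a b d : nat) : (a <= b)%N -> (a ^ d <= b ^ d)%N.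
Proof. by case: d => // d; rewrite leq_exp2r. Qed.

Lemma distn_exp_mono (a b d e : nat) : (d <= e)%N ->
  (`|a ^ d - b ^ d| <= `|a ^ e - b ^ e|)%N.
Proof.
move=> le_de; wlog le_ba : a b / (b <= a)%N => [W|].
  case: (leqP b a) => [/W // | /ltnW /W].
  by rewrite distnC [X in (_ <= X)%N]distnC.
rewrite !distnEl ?leq_wexp2r // -(subnKC le_de) !expnD.
have [a0|a_gt0] := posnP a; first by rewrite a0 (_ : b = 0%N) ?subnn //; lia.
have u_gt0 : (0 < a ^ (e - d))%N by rewrite expn_gt0 a_gt0.
apply: leq_trans (leq_pmulr _ u_gt0) _.
by rewrite mulnBl leq_sub2l // leq_mul2l leq_wexp2r ?orbT.
Qed.

Lemma minn_add_distn (a b : nat) : (minn a b + `|a - b|)%N = maxn a b.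
Proof.
case: (leqP a b) => [le_ab | /ltnW le_ba].
  by rewrite distnEr ?subnKC.
by rewrite distnEl ?subnKC.
Qed.

Section PowerSums.
Variable r : rat.

Definition psum (ks : seq nat) : rat := \sum_(k <- ks) r ^+ k.

Lemma psum_cons k ks : psum (k :: ks) = r ^+ k + psum ks.
Proof. exact: big_cons. Qed.

Lemma psum_cat ks1 ks2 : psum (ks1 ++ ks2) = psum ks1 + psum ks2.
Proof. exact: big_cat. Qed.

Lemma psum_nseq m k : psum (nseq m k) = m%:R * r ^+ k.
Proof.
elim: m => [|m IH]; first by rewrite mul0r /psum big_nil.
by rewrite [nseq _ _]/= psum_cons IH mulrSr mulrDl mul1r addrC.
Qed.

Lemma psum_perm ks1 ks2 : perm_eq ks1 ks2 -> psum ks1 = psum ks2.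
Proof. exact: perm_big. Qed.

Lemma psum_filter (P : pred nat) ks :
  psum ks = psum (filter P ks) + psum (filter (predC P) ks).
Proof. by rewrite -psum_cat; apply: psum_perm; rewrite perm_sym perm_filterC. Qed.

Lemma psum_size_ge c ks : (forall k, k \in ks -> c <= r ^+ k) ->
  (size ks)%:R * c <= psum ks.
Proof.
move=> h; rewrite -sum1_size natr_sum mulr_suml /psum !big_seq.
by apply: ler_sum => k hk; rewrite mul1r h.
Qed.

Lemma psum_size_le c ks : (forall k, k \in ks -> r ^+ k <= c) ->
  psum ks <= (size ks)%:R * c.
Proof.
move=> h; rewrite -sum1_size natr_sum mulr_suml /psum !big_seq.
by apply: ler_sum => k hk; rewrite mul1r h.
Qed.

Lemma psum_from j L : psum [seq k <- L | (j <= k)%N] =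
  r ^+ j * ((count_mem j L)%:R + psum [seq (k - j)%N | k <- L & (j < k)%N]).
Proof.
elim: L => [|k L IH] /=; first by rewrite /psum !big_nil addr0 mulr0.
case: (ltngtP j k) => [lt_jk|_|<-] /=.
- rewrite !psum_cons IH add0n.
  have -> : r ^+ k = r ^+ j * r ^+ (k - j) by rewrite -exprD subnKC // ltnW.
  by ring.
- by [].
by rewrite psum_cons IH add1n mulrSr; ring.
Qed.

Lemma psum_filter_eq (P : pred nat) L1 L2 :
  (forall k, ~~ P k -> count_mem k L1 = count_mem k L2) ->
  psum L1 = psum L2 -> psum (filter P L1) = psum (filter P L2).
Proof.
move=> same_out e.
have e_out : psum (filter (predC P) L1) = psum (filter (predC P) L2).
  apply/psum_perm/counts_perm => k; rewrite !count_mem_filter /=.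
  by case: ifP => // /same_out.
by move: e; rewrite (psum_filter P L1) (psum_filter P L2) e_out => /addIr.
Qed.

Hypothesis r_gt0 : 0 < r.

Lemma psum_gt0 ks : ks != [::] -> 0 < psum ks.
Proof.
case: ks => [//|k ks] _; rewrite psum_cons ltr_pwDl ?exprn_gt0 //.
by apply: sumr_ge0 => j _; rewrite exprn_ge0 // ltW.
Qed.

Lemma count_terms_ge c j ks : psum ks = c%:R * r ^+ j ->
  (forall k, k \in ks -> r ^+ k <= r ^+ j) -> (c <= size ks)%N.
Proof.
move=> e /psum_size_le; rewrite e ler_pM2r ?exprn_gt0 // ler_nat; exact.
Qed.

Lemma count_terms_le c j ks : psum ks = c%:R * r ^+ j ->
  (forall k, k \in ks -> r ^+ j <= r ^+ k) -> (size ks <= c)%N.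
Proof.
move=> e /psum_size_ge; rewrite e ler_pM2r ?exprn_gt0 // ler_nat; exact.
Qed.

End PowerSums.

Lemma psum_upto (r : rat) j L : 0 < r -> psum r [seq k <- L | (k <= j)%N] =
  r ^+ j * ((count_mem j L)%:R + psum r^-1 [seq (j - k)%N | k <- L & (k < j)%N]).
Proof.
move=> r_gt0; elim: L => [|k L IH] /=; first by rewrite /psum !big_nil addr0 mulr0.
case: (ltngtP k j) => [lt_kj|_|->] /=.
- rewrite !psum_cons IH add0n.
  have -> : r ^+ k = r ^+ j * r^-1 ^+ (j - k).
    by rewrite exprVn -{1}(subnKC (ltnW lt_kj)) exprD mulrK // unitfE expf_neq0 // lt0r_neq0.
  by ring.
- by [].
by rewrite psum_cons IH add1n mulrSr; ring.
Qed.

Section Factorizations.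
Variables (r : rat) (N : nat -> Prop).
Hypothesis r_gt0 : 0 < r.
Local Notation S := (exp_puiseux r N).

Definition supported (ks : seq nat) : Prop := forall k, k \in ks -> N k.

Lemma supported_sub ks1 ks2 : {subset ks1 <= ks2} -> supported ks2 -> supported ks1.
Proof. by move=> sub h k /sub /h. Qed.

Lemma supported_cat ks1 ks2 :
  supported ks1 -> supported ks2 -> supported (ks1 ++ ks2).
Proof. by move=> h1 h2 k; rewrite mem_cat => /orP[/h1|/h2]. Qed.

Lemma supported_nseq m k : N k -> supported (nseq m k).
Proof. by move=> hk j /nseqP[-> _]. Qed.

Lemma psum_in_S ks : supported ks -> S (psum r ks).
Proof. by exists ks. Qed.

Lemma power_in_S k : N k -> S (r ^+ k).
Proof.
move=> hk; have -> : r ^+ k = psum r [:: k] by rewrite psum_cons /psum big_nil addr0.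
by apply: psum_in_S => j; rewrite inE => /eqP ->.
Qed.

(* Every atom is a power [r ^+ k] with [k] in N: a sum of two or more powers
   splits into two nonzero elements of S. *)
Lemma atom_is_power a : is_atom S a -> exists2 k, N k & a = r ^+ k.
Proof.
case=> [[[|k ks] [hks ->]] [a_neq0 a_atom]]; first by rewrite big_nil eqxx in a_neq0.
have hk : N k by apply: hks; rewrite mem_head.
have [-> | ks_neq0] := eqVneq ks [::].
  by exists k => //; rewrite big_cons big_nil addr0.
have ks_in : supported ks by apply: supported_sub hks => j hj; rewrite inE hj orbT.
case: (a_atom _ _ (power_in_S hk) (psum_in_S ks_in) (psum_cons r k ks)) => /eqP.
  by rewrite expf_eq0 (negbTE (lt0r_neq0 r_gt0)) andbF.
by rewrite (negbTE (lt0r_neq0 (psum_gt0 r_gt0 ks_neq0))).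
Qed.

Lemma in_lengthsP x l : (forall k, N k -> is_atom S (r ^+ k)) ->
  in_lengths S x l <-> exists ks, [/\ supported ks, size ks = l & psum r ks = x].
Proof.
move=> powers_atoms; split.
  case=> atoms [size_atoms [are_atoms ->{x}]]; rewrite -{}size_atoms.
  elim: atoms are_atoms => [|a atoms IH] are_atoms.
    by exists [::]; rewrite /psum !big_nil.
  have [k hk ->] := atom_is_power (are_atoms a (mem_head _ _)).
  have [|ks [ks_in ks_size ks_sum]] := IH.
    by move=> b hb; apply: are_atoms; rewrite inE hb orbT.
  exists (k :: ks); split; last by rewrite big_cons psum_cons ks_sum.
  - by move=> j; rewrite inE => /orP[/eqP -> | /ks_in].
  - by rewrite /= ks_size.
case=> ks [ks_in <- <-]; exists (map (fun k => r ^+ k) ks).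
rewrite size_map /psum big_map; split=> //; split=> // a /mapP[k hk ->].
exact/powers_atoms/ks_in.
Qed.

End Factorizations.

(* If the numerator of r is 1, then S_{r,N} is not atomic: 1 would factor
   through some atom r^k, but r^k = q^t r^(k+t) splits as soon as k + t lies
   in N, which holds for all large t. *)
Lemma unit_numerator_not_atomic (N : nat -> Prop) (q : nat) :
  numerical_monoid N -> (1 < q)%N -> ~ atomic (exp_puiseux (q%:R)^-1 N).
Proof.
move=> [N0 [_ [b N_large]]] q_gt1 S_atomic.
set r : rat := (q%:R)^-1.
have r_gt0 : 0 < r by rewrite invr_gt0 ltr0n ltnW.
have [[|a atoms] [are_atoms sum1]] := S_atomic 1 (power_in_S r N0) (oner_neq0 _).
  by move/eqP: sum1; rewrite big_nil oner_eq0.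
have a_atom := are_atoms a (mem_head _ _).
have [k _ a_def] := atom_is_power r_gt0 a_atom.
case: a_atom => _ [_ a_atom].
set t := b.+1; set m := (q ^ t - 1)%N.
have m_gt0 : (0 < m)%N by rewrite subn_gt0 -(exp1n t) ltn_exp2r.
have Nkt : N (k + t)%N by apply: N_large; rewrite /t; lia.
have m_in : exp_puiseux r N (psum r (nseq m (k + t))).
  by apply: psum_in_S; apply: supported_nseq.
have a_split : a = r ^+ (k + t) + psum r (nseq m (k + t)).
  have q_neq0 : q%:R != 0 :> rat by rewrite pnatr_eq0 -lt0n ltnW.
  rewrite psum_nseq a_def exprD /m natrB ?expn_gt0 ?(ltnW q_gt1) // natrX /r.
  rewrite !exprVn; set u := q%:R ^+ k; set v := q%:R ^+ t.
  have u_neq0 : u != 0 by rewrite expf_neq0.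
  have v_neq0 : v != 0 by rewrite expf_neq0.
  by field; rewrite u_neq0 v_neq0.
case: (a_atom _ _ (power_in_S r Nkt) m_in a_split) => /eqP.
  by rewrite expf_eq0 (negbTE (lt0r_neq0 r_gt0)) andbF.
by rewrite (negbTE (lt0r_neq0 (psum_gt0 r_gt0 _))) // -size_eq0 size_nseq -lt0n.
Qed.

Lemma digit_unique (P Q a1 a2 b1 b2 : nat) : coprime P Q ->
  (a1 < P)%N -> (a2 < P)%N -> (P %| b1)%N -> (P %| b2)%N ->
  (a1 * Q + b1 = a2 * Q + b2)%N -> a1 = a2.
Proof.
move=> cPQ h1 h2 /dvdnP[c1 ->] /dvdnP[c2 ->] e.
wlog le12 : a1 a2 c1 c2 h1 h2 e / (a1 <= a2)%N.
  move=> W; have [le12|lt21] := leqP a1 a2; first exact: (W _ _ _ _ h1 h2 e le12).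
  by symmetry; apply: (W a2 a1 c2 c1 h2 h1 (esym e)); apply: ltnW.
have /dvdnP[c ec] : (P %| (a2 - a1) * Q)%N.
  by apply/dvdnP; exists (c1 - c2)%N; rewrite !mulnBl; lia.
have : (P %| a2 - a1)%N by rewrite -(Gauss_dvdl _ cPQ) ec dvdn_mull.
have [eq0|pos] := posnP (a2 - a1); first by move=> _; lia.
by move/(dvdn_leq pos); lia.
Qed.

Lemma coprime_split (P Q u v : nat) : coprime P Q ->
  (Q %| u)%N -> (P %| v)%N -> (u + v = P * Q)%N -> u = 0%N \/ v = 0%N.
Proof.
move=> cPQ /dvdnP[y ->] P_v e.
have : (P %| y)%N.
  rewrite -(Gauss_dvdl _ cPQ); have -> : (y * Q = P * Q - v)%N by lia.
  by rewrite dvdn_sub ?dvdn_mulr.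
have [->|y_pos] := posnP y; first by left.
by move/(dvdn_leq y_pos) => le_Py; right; nia.
Qed.

Lemma coprime_distl (p q : nat) : coprime p q -> coprime `|p - q| q.
Proof.
rewrite /coprime => /eqP cop; apply/eqP; case: (leqP q p) => [le_qp | /ltnW le_pq].
  by rewrite distnEl // gcdnC -gcdnDl subnKC // gcdnC.
by rewrite distnEr // -{2}(subnKC le_pq) gcdnDr gcdnC -gcdnDl subnKC.
Qed.

Lemma modn_distn (p q : nat) : p = q %[mod `|p - q|].
Proof.
case: (leqP q p) => [le_qp | /ltnW le_pq].
  by rewrite distnEl // -{1}(subnKC le_qp) modnDr.
by rewrite distnEr // -{2}(subnKC le_pq) modnDr.
Qed.

Section CoprimeRatio.
Variables (r : rat) (p q : nat).
Hypothesis r_def : r = p%:R / q%:R.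
Hypothesis p_gt0 : (0 < p)%N.
Hypothesis q_gt0 : (0 < q)%N.
Hypothesis pq_coprime : coprime p q.

Lemma ratio_gt0 : 0 < r.
Proof. by rewrite r_def divr_gt0 // ltr0n. Qed.

Let qX_neq0 k : (q ^ k)%:R != 0 :> rat.
Proof. by rewrite pnatr_eq0 -lt0n expn_gt0 q_gt0. Qed.

Definition cleared (E : nat) (ks : seq nat) : nat := \sum_(k <- ks) p ^ k * q ^ (E - k).

Lemma power_cleared E k : (k <= E)%N -> r ^+ k * (q ^ E)%:R = (p ^ k * q ^ (E - k))%:R.
Proof.
move=> le_kE; rewrite r_def exprMn exprVn -!natrX -(subnKC le_kE) expnD natrM.
by rewrite addKn mulrA divfK ?natrM.
Qed.

Lemma psum_cleared E ks : (forall k, k \in ks -> k <= E)%N ->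
  psum r ks * (q ^ E)%:R = (cleared E ks)%:R.
Proof.
move=> le_E; rewrite /psum /cleared mulr_suml natr_sum !big_seq.
by apply: eq_bigr => k /le_E; apply: power_cleared.
Qed.

Lemma cleared_dvd_low E ks c : (forall k, k \in ks -> c <= k)%N ->
  (p ^ c %| cleared E ks)%N.
Proof.
move=> ge_c; rewrite /cleared big_seq; apply: dvdn_sum => k /ge_c le_ck.
by rewrite dvdn_mulr // dvdn_exp2l.
Qed.

Lemma cleared_dvd_high E ks c : (forall k, k \in ks -> k <= c)%N ->
  (q ^ (E - c) %| cleared E ks)%N.
Proof.
move=> le_c; rewrite /cleared big_seq; apply: dvdn_sum => k /le_c le_kc.
by rewrite dvdn_mull // dvdn_exp2l // leq_sub2l.
Qed.

Lemma cleared_gt0 E ks : ks != [::] -> (0 < cleared E ks)%N.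
Proof.
case: ks => [//|k ks] _; rewrite /cleared big_cons.
by rewrite ltn_addr // muln_gt0 !expn_gt0 p_gt0 q_gt0.
Qed.

(* Each term p^k q^(E-k) is congruent to q^E modulo |p - q|. *)
Lemma cleared_mod E ks : (forall k, k \in ks -> k <= E)%N ->
  cleared E ks = size ks * q ^ E %[mod `|p - q|].
Proof.
have term k : (k <= E)%N -> p ^ k * q ^ (E - k) = q ^ E %[mod `|p - q|].
  by move=> le_kE; rewrite -modnMml -modnXm modn_distn modnXm modnMml -expnD subnKC.
elim: ks => [|k ks IH] le_E; first by rewrite /cleared big_nil.
have le_kE := le_E k (mem_head _ _).
rewrite /cleared big_cons -/(cleared E ks) /= mulSn -modnDm (term _ le_kE) IH ?modnDm //.
by move=> j hj; apply: le_E; rewrite inE hj orbT.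
Qed.

Lemma psum_size_dvd ks1 ks2 : psum r ks1 = psum r ks2 -> (size ks1 <= size ks2)%N ->
  (`|p - q| %| size ks2 - size ks1)%N.
Proof.
move=> e le12; have [E le_E] := exponent_bound (ks1 ++ ks2).
have le_E1 k : k \in ks1 -> (k <= E)%N by move=> hk; apply: le_E; rewrite mem_cat hk.
have le_E2 k : k \in ks2 -> (k <= E)%N by move=> hk; apply: le_E; rewrite mem_cat hk orbT.
have cl : cleared E ks1 = cleared E ks2.
  by apply/eqP; rewrite -(eqr_nat rat) -psum_cleared // -psum_cleared // e.
rewrite -(Gauss_dvdl _ (coprimeXr E (coprime_distl pq_coprime))) mulnBl.
by rewrite -eqn_mod_dvd ?leq_mul2r ?le12 ?orbT // -!cleared_mod // cl.
Qed.

Lemma leading_digit_unique d c1 c2 A1 A2 : (c1 < p ^ d)%N -> (c2 < p ^ d)%N ->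
  (forall m, m \in A1 ++ A2 -> d <= m)%N ->
  c1%:R + psum r A1 = c2%:R + psum r A2 -> c1 = c2.
Proof.
move=> c1_lt c2_lt ge_d e; have [E le_E] := exponent_bound (A1 ++ A2).
have le_E1 k : k \in A1 -> (k <= E)%N by move=> hk; apply: le_E; rewrite mem_cat hk.
have le_E2 k : k \in A2 -> (k <= E)%N by move=> hk; apply: le_E; rewrite mem_cat hk orbT.
apply: (@digit_unique _ (q ^ E) _ _ (cleared E A1) (cleared E A2) _ c1_lt c2_lt).
- by rewrite coprimeXl // coprimeXr.
- by apply: cleared_dvd_low => m hm; apply: ge_d; rewrite mem_cat hm.
- by apply: cleared_dvd_low => m hm; apply: ge_d; rewrite mem_cat hm orbT.
apply/eqP; rewrite -(eqr_nat rat) !natrD !natrM -!psum_cleared //.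
by rewrite -!mulrDl e.
Qed.

Hypotheses (p_gt1 : (1 < p)%N) (q_gt1 : (1 < q)%N).

Let not_dvd_coprime a b e : (1 < a)%N -> coprime a b -> ~~ (a %| b ^ e)%N.
Proof.
move=> a_gt1 cab; apply/negP => /gcdn_idPl; move: (coprimeXr e cab).
by rewrite /coprime => /eqP -> a1; move: a_gt1; rewrite -a1.
Qed.

(* Comparing p- and q-adic valuations: a power sum equal to r^k has an
   exponent at most k and an exponent at least k. *)
Lemma power_sum_straddles k ks : ks != [::] -> psum r ks = r ^+ k ->
  has (fun j => j <= k)%N ks /\ has (fun j => k <= j)%N ks.
Proof.
move=> ks_neq0 e; have [E le_E] := exponent_bound (k :: ks).
have le_kE : (k <= E)%N := le_E k (mem_head _ _).
have le_ksE j : j \in ks -> (j <= E)%N by move=> hj; apply: le_E; rewrite inE hj orbT.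
have cl : cleared E ks = (p ^ k * q ^ (E - k))%N.
  by apply/eqP; rewrite -(eqr_nat rat) -psum_cleared // e power_cleared.
split; apply/negPn/negP => /hasPn all_side.
  have : (p ^ k.+1 %| cleared E ks)%N.
    by apply: cleared_dvd_low => j /all_side; rewrite ltnNge.
  rewrite cl expnSr dvdn_pmul2l ?expn_gt0 ?p_gt0 //.
  exact/negP/not_dvd_coprime.
have [j j_in] : exists j, j \in ks.
  by case: ks ks_neq0 {e all_side le_ksE le_E cl} => // j ? _; exists j; rewrite mem_head.
have [k' k_def] : exists k', k = k'.+1.
  by exists k.-1; have := all_side j j_in; rewrite -ltnNge; lia.
have : (q ^ (E - k') %| cleared E ks)%N.
  by apply: cleared_dvd_high => i /all_side; rewrite -ltnNge k_def.
have -> : (E - k' = (E - k).+1)%N by lia.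
rewrite cl expnS dvdn_pmul2r ?expn_gt0 ?q_gt0 //.
by apply/negP/not_dvd_coprime; rewrite // coprime_sym.
Qed.

(* The powers r^k are atoms, whatever the exponent set N: a sum of two or more
   powers equal to r^k would have all its terms below r^k, yet by the previous
   lemma it contains a term r^j with j on the side of k where powers grow. *)
Lemma power_is_atom (N : nat -> Prop) k : N k -> is_atom (exp_puiseux r N) (r ^+ k).
Proof.
move=> hk; have r_gt0 := ratio_gt0.
split; first exact: power_in_S; split; first by rewrite expf_neq0 // lt0r_neq0.
move=> _ _ [ks1 [_ ->]] [ks2 [_ ->]] e.
have [->|ks1_neq0] := eqVneq ks1 [::]; first by left; rewrite big_nil.
have [->|ks2_neq0] := eqVneq ks2 [::]; first by right; rewrite big_nil.
exfalso; set ks := ks1 ++ ks2.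
have sum_ks : psum r ks = r ^+ k by rewrite psum_cat.
have below j : j \in ks -> r ^+ j < r ^+ k.
  move=> j_in; rewrite -sum_ks (psum_perm r (perm_to_rem j_in)) psum_cons ltrDl psum_gt0 //.
  rewrite -size_eq0 size_rem // /ks size_cat.
  by move: ks1_neq0 ks2_neq0; rewrite -!size_eq0; lia.
have ks_neq0 : ks != [::] by rewrite -size_eq0 size_cat; move: ks1_neq0; rewrite -size_eq0; lia.
have [/hasP[j1 j1_in le_j1k] /hasP[j2 j2_in le_kj2]] := power_sum_straddles ks_neq0 sum_ks.
have [r_ge1|r_lt1] := lerP 1 r.
  by have := below _ j2_in; rewrite ltNge ler_weXn2l.
by have := below _ j1_in; rewrite ltNge ler_wiXn2l // ?ltW.
Qed.

End CoprimeRatio.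

Section Enumeration.
Variables (N : nat -> Prop) (s : nat -> nat).
Hypothesis N_monoid : numerical_monoid N.
Hypothesis s_enum : enumerates N s.

Lemma s_ltE i j : (s i < s j)%N = (i < j)%N.
Proof.
have s_homo : {homo s : i j / (i < j)%N} by apply: homo_ltn s_enum.1 => ? ? ?; apply: ltn_trans.
by case: (ltngtP i j) => [/s_homo | /s_homo /ltnW | ->]; rewrite ?ltnn // ltnNge => ->.
Qed.

Lemma s_leE i j : (s i <= s j)%N = (i <= j)%N.
Proof. by rewrite leqNgt s_ltE -leqNgt. Qed.

Lemma s_in i : N (s i).
Proof. by apply/s_enum.2; exists i. Qed.

Lemma N_enum k : N k -> exists i, s i = k.
Proof. by move/s_enum.2. Qed.

Lemma s0 : s 0 = 0%N.
Proof.
have [i si0] := N_enum (proj1 N_monoid).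
by apply/eqP; rewrite -leqn0 -[X in (_ <= X)%N]si0 s_leE.
Qed.

Lemma N_gap k i : N k -> (k <= s i)%N || (s i.+1 <= k)%N.
Proof. by case/N_enum => j <-; rewrite !s_leE; case: leqP. Qed.

Lemma N_succ k : N k -> (0 < k)%N -> exists i, k = s i.+1.
Proof. by case/N_enum => -[|i] <-; [rewrite s0 | exists i]. Qed.

Lemma step_gt0 i : (0 < s i.+1 - s i)%N.
Proof. by rewrite subn_gt0 s_ltE. Qed.

(* Every step s_(i+1) - s_i is at most the first one, s_1 - s_0 = s_1, since
   s_i + s_1 lies in N beyond s_i. *)
Lemma step_le_first i : (s i.+1 - s i <= s 1 - s 0)%N.
Proof.
rewrite s0 subn0.
have sum_in : N (s i + s 1)%N by apply: (proj1 (proj2 N_monoid)); apply: s_in.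
have := N_gap i sum_in; have := s_ltE 0 1; rewrite s0 /=; lia.
Qed.

End Enumeration.

Section ExpPuiseux.
Variables (N : nat -> Prop) (s : nat -> nat) (r : rat) (p q : nat).
Hypothesis N_monoid : numerical_monoid N.
Hypothesis s_enum : enumerates N s.
Hypothesis r_def : r = p%:R / q%:R.
Hypotheses (p_gt1 : (1 < p)%N) (q_gt1 : (1 < q)%N).
Hypothesis pq_coprime : coprime p q.

Local Notation S := (exp_puiseux r N).
Local Notation supp := (supported N).
Local Notation step i := (s i.+1 - s i)%N.

Let p_gt0 : (0 < p)%N := ltnW p_gt1.
Let q_gt0 : (0 < q)%N := ltnW q_gt1.
Let r_gt0 : 0 < r := ratio_gt0 r_def p_gt0 q_gt0.

Lemma p_neq_q : p != q.
Proof.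
by apply: contraTneq pq_coprime => <-; rewrite /coprime gcdnn neq_ltn p_gt1 orbT.
Qed.

Let lengthsP x l : in_lengths S x l <-> exists L, [/\ supp L, size L = l & psum r L = x].
Proof.
exact: (in_lengthsP r_gt0 x l (@power_is_atom r p q r_def p_gt0 q_gt0 pq_coprime p_gt1 q_gt1 N)).
Qed.

Lemma exchange i : (p ^ step i)%:R * r ^+ s i = (q ^ step i)%:R * r ^+ s i.+1.
Proof.
have le_s : (s i <= s i.+1)%N by rewrite (s_leE s_enum).
have -> : r ^+ s i.+1 = r ^+ s i * r ^+ step i by rewrite -exprD subnKC.
have qX_neq0 : (q ^ step i)%:R != 0 :> rat by rewrite pnatr_eq0 -lt0n expn_gt0 q_gt0.
by rewrite [in r ^+ step i]r_def exprMn exprVn -!natrX; field.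
Qed.

(* Orienting the relation so that it shortens factorizations: [heavy i] is
   the exponent carrying the larger coefficient max(p,q)^(step i). *)
Definition heavy i := if (q < p)%N then s i else s i.+1.
Definition light i := if (q < p)%N then s i.+1 else s i.

Lemma exchange_oriented i :
  (maxn p q ^ step i)%:R * r ^+ heavy i = (minn p q ^ step i)%:R * r ^+ light i.
Proof.
by rewrite /heavy /light; case: ltnP => _; rewrite exchange.
Qed.

Lemma minn_exp_add_distn d : (minn p q ^ d + `|p ^ d - q ^ d| = maxn p q ^ d)%N.
Proof.
case: (leqP p q) => [le_pq | /ltnW le_qp].
  by rewrite distnEr ?subnKC ?leq_wexp2r.
by rewrite distnEl ?subnKC ?leq_wexp2r.
Qed.

Lemma distn_step_gt0 i : (0 < `|p ^ step i - q ^ step i|)%N.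
Proof. by rewrite lt0n distn_eq0 eqn_exp2r ?(step_gt0 s_enum) // p_neq_q. Qed.

Lemma shorten i L : supp L -> (maxn p q ^ step i <= count_mem (heavy i) L)%N ->
  exists L', [/\ supp L', psum r L' = psum r L &
                  size L = (size L' + `|p ^ step i - q ^ step i|)%N].
Proof.
move=> L_supp /perm_extract[rest perm_rest].
have rest_supp : supp rest.
  by apply: supported_sub L_supp => k k_in; rewrite (perm_mem perm_rest) mem_cat k_in orbT.
exists (nseq (minn p q ^ step i) (light i) ++ rest); split.
- apply: supported_cat rest_supp; apply: supported_nseq.
  by rewrite /light; case: ifP => _; apply: (s_in s_enum).
- by rewrite (psum_perm r perm_rest) !psum_cat !psum_nseq exchange_oriented.
by rewrite (perm_size perm_rest) !size_cat !size_nseq -minn_exp_add_distn addnAC.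
Qed.

Definition canonical L := forall i, (count_mem (heavy i) L < maxn p q ^ step i)%N.

Lemma reduce_to_canonical L : supp L ->
  exists L', [/\ supp L', psum r L' = psum r L, (size L' <= size L)%N & canonical L'].
Proof.
move=> L_supp; have [n] := ubnP (size L); elim: n L L_supp => // n IH L L_supp.
rewrite ltnS => le_n.
have [can_L | /not_all_ex_not[i /negP]] := classic (canonical L); first by exists L.
rewrite -leqNgt => many; have [L' [L'_supp eL' size_L']] := shorten L_supp many.
have [|L'' [L''_supp eL'' le_L'' can_L'']] := IH L' L'_supp.
  by apply: leq_trans le_n; rewrite size_L' -addn1 leq_add2l distn_step_gt0.
exists L''; split; rewrite ?eL'' //.
by apply: leq_trans le_L'' _; rewrite size_L' leq_addr.
Qed.

Let count_out j L : supp L -> ~ N j -> count_mem j L = 0%N.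
Proof. by move=> L_supp not_Nj; apply/count_memPn/negP => /L_supp. Qed.

(* Uniqueness of canonical factorizations when r > 1: the multiplicity of
   each exponent s_t is the leading digit, in base p^(step t), of the part of
   the factorization at or above s_t; induct upwards on the exponent. *)
Lemma canonical_unique_gt L1 L2 : (q < p)%N -> supp L1 -> supp L2 ->
  canonical L1 -> canonical L2 -> psum r L1 = psum r L2 -> perm_eq L1 L2.
Proof.
move=> lt_qp supp1 supp2 can1 can2 e; apply: counts_perm; elim/ltn_ind => j IH.
have [/(N_enum s_enum)[t jt] | not_Nj] := classic (N j); last by rewrite !count_out.
subst j; have digit_lt L : canonical L -> (count_mem (s t) L < p ^ step t)%N.
  by move=> /(_ t); rewrite /heavy lt_qp (maxn_idPl (ltnW lt_qp)).
have above_ge L : supp L -> forall m, m \in [seq (k - s t)%N | k <- L & (s t < k)%N] ->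
    (step t <= m)%N.
  move=> L_supp m /mapP[k]; rewrite mem_filter => /andP[lt_k k_in] ->.
  by apply: leq_sub2r; move: (N_gap s_enum t (L_supp k k_in)); rewrite leqNgt lt_k.
have below k : ~~ (s t <= k)%N -> count_mem k L1 = count_mem k L2.
  by rewrite -ltnNge; apply: IH.
have := psum_filter_eq (P := fun k => (s t <= k)%N) below e.
rewrite !psum_from => e_from.
have e_digits := mulfI (expf_neq0 (s t) (lt0r_neq0 r_gt0)) e_from.
apply: (leading_digit_unique r_def q_gt0 pq_coprime (digit_lt _ can1) (digit_lt _ can2) _ e_digits).
by move=> m; rewrite mem_cat => /orP[]; apply: above_ge.
Qed.

(* When r < 1 the roles of p and q swap: the multiplicity of s_(t+1) is the
   leading digit, in base q^(step t), of the part of the factorization at or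
   below s_(t+1), read as a power sum of 1/r = q/p; induct downwards from the
   largest exponent. *)
Lemma canonical_unique_lt L1 L2 : (p < q)%N -> supp L1 -> supp L2 ->
  canonical L1 -> canonical L2 -> psum r L1 = psum r L2 -> perm_eq L1 L2.
Proof.
move=> lt_pq supp1 supp2 can1 can2 e; apply: counts_perm.
have [B le_B] := exponent_bound (L1 ++ L2).
suff eq_counts n j : (B < j + n)%N -> count_mem j L1 = count_mem j L2.
  by move=> j; apply: (eq_counts B.+1); rewrite addnS ltnS leq_addl.
elim: n j => [|n IH] j lt_B.
  have out L : {subset L <= L1 ++ L2} -> count_mem j L = 0%N.
    move=> sub; apply/count_memPn; apply: contraTN lt_B => /sub /le_B.
    by rewrite addn0 -leqNgt.
  by rewrite !out // => k k_in; rewrite mem_cat k_in ?orbT.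
have [Nj | not_Nj] := classic (N j); last by rewrite !count_out.
have above k : ~~ (k <= j)%N -> count_mem k L1 = count_mem k L2.
  by rewrite -ltnNge => lt_jk; apply: IH; lia.
have := psum_filter_eq (P := fun k => (k <= j)%N) above e.
rewrite !psum_upto // => e_upto.
have e_digits := mulfI (expf_neq0 j (lt0r_neq0 r_gt0)) e_upto.
have [j0 | /(N_succ N_monoid s_enum Nj)[t jt]] := posnP j.
  move: e_digits; rewrite j0 !(@eq_filter _ _ pred0) ?filter_pred0 // /psum !big_nil !addr0.
  by move/eqP; rewrite eqr_nat => /eqP.
subst j; have ltn_qp_false : (q < p)%N = false by apply/negbTE; rewrite -leqNgt ltnW.
have digit_lt L : canonical L -> (count_mem (s t.+1) L < q ^ step t)%N.
  by move=> /(_ t); rewrite /heavy ltn_qp_false (maxn_idPr (ltnW lt_pq)).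
have below_ge L : supp L -> forall m,
    m \in [seq (s t.+1 - k)%N | k <- L & (k < s t.+1)%N] -> (step t <= m)%N.
  move=> L_supp m /mapP[k]; rewrite mem_filter => /andP[lt_k k_in] ->.
  by apply: leq_sub2l; move: (N_gap s_enum t (L_supp k k_in)); rewrite [X in _ || X]leqNgt lt_k orbF.
have rinv_def : r^-1 = q%:R / p%:R by rewrite r_def invf_div.
have qp_coprime : coprime q p by rewrite coprime_sym.
apply: (leading_digit_unique rinv_def p_gt0 qp_coprime (digit_lt _ can1) (digit_lt _ can2) _ e_digits).
by move=> m; rewrite mem_cat => /orP[]; apply: below_ge.
Qed.

Lemma canonical_unique L1 L2 : supp L1 -> supp L2 ->
  canonical L1 -> canonical L2 -> psum r L1 = psum r L2 -> size L1 = size L2.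
Proof.
move=> supp1 supp2 can1 can2 e; apply: perm_size.
case: (ltngtP p q) => [lt_pq | lt_qp | eq_pq].
- exact: canonical_unique_lt.
- exact: canonical_unique_gt.
by move: p_neq_q; rewrite eq_pq eqxx.
Qed.

(* Every factorization of p^(step i) r^(s_i) lies entirely at or below s_i or
   entirely at or above s_(i+1): clearing denominators, the two parts would be
   a multiple of q^(E - s_i) and a multiple of p^(s_(i+1)) adding up to
   p^(s_(i+1)) q^(E - s_i). *)
Lemma step_factorization_sides i L : supp L -> psum r L = (p ^ step i)%:R * r ^+ s i ->
  all (fun k => k <= s i)%N L \/ all (fun k => s i.+1 <= k)%N L.
Proof.
move=> L_supp e; set P := fun k => (k <= s i)%N.
set low := filter P L; set high := filter (predC P) L.
have [E le_E] := exponent_bound (s i.+1 :: L).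
have le_LE k : k \in L -> (k <= E)%N by move=> k_in; apply: le_E; rewrite inE k_in orbT.
have le_partE (Q : pred nat) k : k \in filter Q L -> (k <= E)%N.
  by rewrite mem_filter => /andP[_ /le_LE].
have le_s : (s i <= s i.+1)%N by rewrite (s_leE s_enum).
have split_sum : (cleared p q E low + cleared p q E high = p ^ s i.+1 * q ^ (E - s i))%N.
  apply/eqP; rewrite -(eqr_nat rat) natrD.
  rewrite -(psum_cleared r_def q_gt0 (le_partE P)) -(psum_cleared r_def q_gt0 (le_partE (predC P))).
  rewrite -mulrDl -psum_filter e -mulrA (power_cleared r_def q_gt0); last exact: leq_trans le_s (le_E _ (mem_head _ _)).
  by rewrite -natrM mulnA -expnD subnK.
have low_dvd : (q ^ (E - s i) %| cleared p q E low)%N.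
  by apply: cleared_dvd_high => k; rewrite mem_filter => /andP[].
have high_dvd : (p ^ s i.+1 %| cleared p q E high)%N.
  apply: cleared_dvd_low => k; rewrite mem_filter => /andP[/= gt_k k_in].
  by move: (N_gap s_enum i (L_supp k k_in)); rewrite /P in gt_k; rewrite (negbTE gt_k).
have pq_coprimeX : coprime (p ^ s i.+1) (q ^ (E - s i)) by rewrite coprimeXl // coprimeXr.
have empty L' : cleared p q E L' = 0%N -> forall k, k \in L' = false.
  by move=> L'0 k; apply/negbTE; apply: contra_eqN L'0 => k_in; rewrite -lt0n cleared_gt0 //; apply/eqP => L'_nil; rewrite L'_nil in k_in.
case: (coprime_split pq_coprimeX low_dvd high_dvd split_sum) => [/empty low0 | /empty high0].
  right; apply/allP => k k_in; move: (N_gap s_enum i (L_supp k k_in)).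
  by have := low0 k; rewrite mem_filter k_in andbT /P => ->.
left; apply/allP => k k_in; apply/negPn/negP => gt_k.
by have := high0 k; rewrite mem_filter k_in /= gt_k.
Qed.

(* Hence no factorization of p^(step i) r^(s_i) has a length strictly between
   p^(step i) and q^(step i): all its terms lie on one side of r^(s_i) (or of
   r^(s_(i+1))), which bounds the number of terms. *)
Lemma step_lengths i L : supp L -> psum r L = (p ^ step i)%:R * r ^+ s i ->
  (size L <= minn (p ^ step i) (q ^ step i))%N \/
  (maxn (p ^ step i) (q ^ step i) <= size L)%N.
Proof.
move=> L_supp e; have e' : psum r L = (q ^ step i)%:R * r ^+ s i.+1 by rewrite e exchange.
have pow_anti j k : (p <= q)%N -> (j <= k)%N -> r ^+ k <= r ^+ j.
  move=> le_pq; apply: ler_wiXn2l; first exact: ltW.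
  by rewrite r_def ler_pdivrMr ?ltr0n // mul1r ler_nat.
have pow_mono j k : (q <= p)%N -> (j <= k)%N -> r ^+ j <= r ^+ k.
  move=> le_qp; apply: ler_weXn2l.
  by rewrite r_def ler_pdivlMr ?ltr0n // mul1r ler_nat.
have [/allP low | /allP high] := step_factorization_sides L_supp e;
  case: (leqP p q) => [le_pq | /ltnW le_qp];
  rewrite ?(minn_idPl (leq_wexp2r _ le_pq)) ?(maxn_idPr (leq_wexp2r _ le_pq));
  rewrite ?(minn_idPr (leq_wexp2r _ le_qp)) ?(maxn_idPl (leq_wexp2r _ le_qp)).
- left; apply: (count_terms_le r_gt0 e) => k /low le_ki.
  exact: pow_anti.
- right; apply: (count_terms_ge r_gt0 e) => k /low le_ki.
  exact: pow_mono.
- right; apply: (count_terms_ge r_gt0 e') => k /high le_ik.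
  exact: pow_anti.
- left; apply: (count_terms_le r_gt0 e') => k /high le_ik.
  exact: pow_mono.
Qed.

Lemma step_distance i : delta_set S `|p ^ step i - q ^ step i|.
Proof.
set a := (p ^ step i)%N; set b := (q ^ step i)%N; set x := a%:R * r ^+ s i.
have len_a : in_lengths S x a.
  apply/lengthsP; exists (nseq a (s i)); rewrite size_nseq psum_nseq.
  by split=> //; apply: supported_nseq; apply: (s_in s_enum).
have len_b : in_lengths S x b.
  apply/lengthsP; exists (nseq b (s i.+1)); rewrite size_nseq psum_nseq -exchange.
  by split=> //; apply: supported_nseq; apply: (s_in s_enum).
exists x; split.
  by rewrite /x -psum_nseq; apply: psum_in_S; apply: supported_nseq; apply: (s_in s_enum).
split; first exact: distn_step_gt0.
exists (minn a b); rewrite minn_add_distn; split; last split.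
- by case: leqP.
- by case: leqP.
move=> l lt_l lt'_l /lengthsP[L [L_supp size_L eL]].
by case: (step_lengths L_supp eL); rewrite size_L; lia.
Qed.

(* Lower bound: lengths of an element are congruent modulo |p - q|. *)
Lemma distance_ge x d : is_distance S x d -> (`|p - q| <= d)%N.
Proof.
case=> d_gt0 [l [/lengthsP[L1 [_ size1 e1]] [/lengthsP[L2 [_ size2 e2]] _]]].
apply: dvdn_leq d_gt0 _.
have := psum_size_dvd r_def q_gt0 pq_coprime (etrans e1 (esym e2)).
by rewrite size1 size2 addKn; apply; apply: leq_addr.
Qed.

(* Upper bound: take factorizations of lengths l < l + d with no length in
   between.  The longer one is canonical, since a shortening would remove
   |p^(step i) - q^(step i)| <= |p^(step 0) - q^(step 0)| < d terms; the
   shorter one reduces to a canonical factorization of length at most l; and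
   canonical factorizations of the same element have the same length. *)
Lemma distance_le x d : is_distance S x d ->
  (d <= `|p ^ step 0 - q ^ step 0|)%N.
Proof.
case=> _ [l [/lengthsP[L0 [L0_supp size_L0 eL0]] [/lengthsP[L [L_supp size_L eL]] between]]].
rewrite leqNgt; apply/negP => big_d.
have can_L : canonical L.
  apply: NNPP => /not_all_ex_not[i /negP]; rewrite -leqNgt => many.
  have [L' [L'_supp eL' size_L']] := shorten L_supp many.
  have := distn_exp_mono p q (step_le_first N_monoid s_enum i).
  have := distn_step_gt0 i.
  move=> gap_gt0 gap_le; apply: (between (size L')); try lia.
  by apply/lengthsP; exists L'; split; rewrite // eL' eL.
have [L1 [L1_supp eL1 le_L1 can_L1]] := reduce_to_canonical L0_supp.
have := canonical_unique L_supp L1_supp can_L can_L1 (etrans eL (esym (etrans eL1 eL0))).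
lia.
Qed.

End ExpPuiseux.

Unset Implicit Arguments. Set Strict Implicit.

(* Write r = p/q in lowest terms: q > 1 since r is not an integer, and p > 1
   since S_{r,N} is atomic; then combine the three bounds above. *)
Theorem mainTheorem9 (r : rat) (N : nat -> Prop) (s : nat -> nat) :
  numerical_monoid N -> enumerates N s ->
  0 < r ->
  (forall m : nat, r != m%:R) ->          (* nontrivial: r not in N *)
  atomic (exp_puiseux r N) ->
  (forall n : nat,
     delta_set (exp_puiseux r N)
       `|numq r ^+ (s n.+1 - s n) - denq r ^+ (s n.+1 - s n)|%N) /\
  (forall d : nat, delta_set (exp_puiseux r N) d ->
     (`|numq r - denq r|%N <= d)%N /\
     (d <= `|numq r ^+ (s 1%N - s 0%N) - denq r ^+ (s 1%N - s 0%N)|%N)%N).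
Proof.
move=> N_monoid s_enum r_gt0 r_not_nat S_atomic.
set p := `|numq r|%N; set q := `|denq r|%N.
have numqE : numq r = p by rewrite /p abszE gtr0_norm // numq_gt0.
have denqE : denq r = q by rewrite /q abszE gtr0_norm // denq_gt0.
have r_def : r = p%:R / q%:R by rewrite -[r in LHS]divq_num_den numqE denqE.
have q_gt1 : (1 < q)%N.
  rewrite ltn_neqAle -(ltz_nat 0) -denqE denq_gt0 andbT.
  by apply: contraNneq (r_not_nat p) => q1; rewrite r_def -q1 divr1.
have p_gt1 : (1 < p)%N.
  rewrite ltn_neqAle -(ltz_nat 0) -numqE numq_gt0 r_gt0 andbT.
  apply/eqP => p1; apply: (unit_numerator_not_atomic N_monoid q_gt1).
  by rewrite r_def -p1 div1r in S_atomic.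
have pq_coprime : coprime p q by apply: coprime_num_den.
rewrite numqE denqE; split=> [n | d [x [_ dist]]]; rewrite -!natz -!natrX !natz.
  exact: step_distance.
split; [exact: distance_ge dist | exact: distance_le dist].
Qed.
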